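(* Assume $|\mathbb O|\ge2$. Let $\mathcal I\subseteq\mathcal V$ and consider the PID opinion dynamics with initial states satisfying $x_i(0)=\theta$ for all $i\in\mathcal I$. The following are equivalent: (1) the system almost surely converges to the consensus state $(\theta,\dots,\theta)$, regardless of the initial opinions $x_i(0)\in\mathbb O$ of the nodes $i\in\mathcal V\setminus\mathcal I$; (2) every non-empty strictly cohesive subset of $\mathcal V$ contains at least one node of $\mathcal I$.
   Context: Let $n\ge1$, $\mathcal V=\{1,\dots,n\}$, and let $W=(w_{ij})$ be an $n\times n$ row-stochastic matrix (nonnegative entries, each row summing to $1$). The opinion set is a finite set of consecutive integers $\mathbb O=\{k,\dots,k+s\}$, and $\theta\in\mathbb O$ is a fixed ''truth''. For $x\in\mathbb O^n$, $i\in\mathcal V$, $z\in\mathbb O$, define $C^i_{\mathrm{social}}(z;x)=\sum_{j=1}^n w_{ij}|z-x_j|$ and $C^i_{\mathrm{cog}}(z)=|z-\theta|$, and $P_i(x)=\{z\in\mathbb O: C^i_{\mathrm{social}}(z;x)\le C^i_{\mathrm{social}}(x_i;x),\ |z-\theta|\le |x_i-\theta|\}$. PID opinion dynamics: starting from $x(0)$, at each time $t+1$ a node $i$ is chosen uniformly at random from $\mathcal V$ and sets $x_i(t+1)$ to an element chosen at random from $P_i(x(t))$, each element having positive probability; all other nodes keep their opinions. A set $\mathcal M\subseteq\mathcal V$ is strictly cohesive if $\sum_{j\in\mathcal M}w_{ij}>\tfrac12$ for every $i\in\mathcal M$. *)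

From HB Require Import structures.
From mathcomp Require Import all_boot all_order all_algebra.
From mathcomp Require Import all_classical all_reals all_analysis.
Set Implicit Arguments. Unset Strict Implicit. Unset Printing Implicit Defensive.
Import Order.TTheory GRing.Theory Num.Theory.
Local Open Scope ring_scope.
Local Open Scope classical_set_scope.

Notation state n := {ffun 'I_n -> int}.

Section PID.
Variables (R : realType) (n : nat) (W : 'I_n -> 'I_n -> R).
Variables (k : int) (s : nat) (theta : int).

Definition inO (z : int) : bool := (k <= z) && (z <= k + s%:Z).

Definition row_stochastic : Prop :=
  (forall i j, 0 <= W i j) /\ (forall i, \sum_(j < n) W i j = 1).

Definition C_social (i : 'I_n) (z : int) (x : state n) : R :=
  \sum_(j < n) W i j * `|((z - x j)%:~R : R)|.

Definition C_cog (z : int) : int := `|z - theta|%:Z.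

Definition Pset (i : 'I_n) (x : state n) (z : int) : bool :=
  [&& inO z, C_social i z x <= C_social i (x i) x & C_cog z <= C_cog (x i)].

(* Update law: q i x z is the probability that node i, when chosen in state x,
   adopts opinion z.  Only states in O^n matter
   (the chain never leaves O^n). *)
Definition valid_update (q : 'I_n -> state n -> int -> R) : Prop :=
  forall i (x : state n), (forall j, inO (x j)) ->
    (forall z, 0 <= q i x z) /\
    (forall z, (0 < q i x z) = Pset i x z) /\
    (\sum_(u < s.+1) q i x (k + u%:Z) = 1).

Definition trans (q : 'I_n -> state n -> int -> R) (x y : state n) : R :=
  \sum_(i < n)
     (if [forall j, (j != i) ==> (y j == x j)] then n%:R^-1 * q i x (y i) else 0).

Definition consensus : state n := [ffun _ => theta].

Definition strictly_cohesive (M : {set 'I_n}) : bool :=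
  [forall i in M, (1 / 2 : R) < \sum_(j in M) W i j].

Definition admissible (I : {set 'I_n}) (x0 : state n) : bool :=
  [forall i, inO (x0 i)] && [forall i in I, x0 i == theta].

(* X is a realization of the PID dynamics started at x0: each X t is a
   random variable (its level sets are measurable) and the finite-dimensional
   distributions are those of the Markov chain with initial state x0 and
   transition probabilities trans q. *)
Definition PID_process {d : measure_display} {T : measurableType d}
  (P : probability T R) (q : 'I_n -> state n -> int -> R) (x0 : state n)
  (X : nat -> T -> state n) : Prop :=
  (forall t y, measurable [set w | X t w = y]) /\
  (forall (t : nat) (xs : nat -> state n),
     P [set w | forall u, (u <= t)%N -> X u w = xs u] =
     ((if xs 0%N == x0 then 1 else 0) *
      \prod_(u < t) trans q (xs u) (xs u.+1))%:E).

(* Almost sure convergence to consensus (in the discrete set of states,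
   convergence means eventually equal). *)
Definition as_converges_to_consensus {d : measure_display} {T : measurableType d}
  (P : probability T R) (X : nat -> T -> state n) : Prop :=
  P [set w | exists T0 : nat, forall t, (T0 <= t)%N -> X t w = consensus] = 1%E.

End PID.

From HB Require Import structures.
From mathcomp Require Import all_boot all_order all_algebra.
From mathcomp Require Import all_classical all_reals all_analysis.
From mathcomp Require Import zify ring lra.
Import Order.TTheory GRing.Theory Num.Theory.
Local Open Scope ring_scope.

Set Implicit Arguments. Unset Strict Implicit. Unset Printing Implicit Defensive.

(* Sufficiency.  Restrict the chain to the finite set of profiles in which
   the nodes of I hold the truth theta; there the consensus on theta is
   absorbing.  From any other profile, let a be the opinion farthest from
   theta on one side.  The holders of a avoid I, so they do not form a
   strictly cohesive set, and one of them gives weight at most 1/2 to them;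
   moving it one step from a towards theta increases neither its social nor
   its cognitive cost.  Hence the total distance to theta, which is at
   most some L, drops to 0 within L steps with probability at least some
   rho > 0, and the chain is absorbed after Q L steps with probability at
   least 1 - (1 - rho)^Q.
   Necessity.  If a nonempty strictly cohesive M avoids I, the profile
   with some a <> theta on M and theta elsewhere is a fixed point: nodes
   outside M sit at theta, and a node of M leaving a strictly increases its
   social cost.  So the chain never reaches consensus. *)

Lemma geometric_le (R : realType) (r eps : R) :
  0 <= r -> r < 1 -> 0 < eps -> exists Q, r ^+ Q <= eps.
Proof.
move=> r_ge0 r_lt1 eps_gt0.
have r_norm : `|r| < 1 by rewrite ger0_norm.
have /cvgrPdist_lt/(_ eps eps_gt0) [Q _ rQ] := cvg_expr r_norm.
exists Q; have := rQ Q (leqnn Q).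
by rewrite sub0r normrN ger0_norm ?exprn_ge0 // => /ltW.
Qed.

Section AbsorbingChain.
Variables (R : realType) (S : finType) (K : S -> S -> R) (c : S).

Definition kstep (f : S -> R) (u : S) : R := \sum_v K u v * f v.

(* The probability, starting from [u], of being at [c] at time [m]. *)
Definition absorb_prob (m : nat) : S -> R := iter m kstep (fun v => (v == c)%:R).

Hypothesis K_ge0 : forall u v, 0 <= K u v.
Hypothesis K_sum1 : forall u, \sum_v K u v = 1.
Hypothesis K_cc : K c c = 1.

Lemma K_absorbing v : v != c -> K c v = 0.
Proof.
move=> vc; apply/eqP; rewrite eq_le K_ge0 andbT.
have := K_sum1 c; rewrite (bigD1 c) //= (bigD1 v) //= K_cc.
have : 0 <= \sum_(w | (w != c) && (w != v)) K c w by exact: sumr_ge0.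
lra.
Qed.

Lemma kstep_c f : kstep f c = f c.
Proof.
rewrite /kstep (bigD1 c) //= K_cc mul1r big1 ?addr0 // => v /K_absorbing ->.
exact: mul0r.
Qed.

Lemma absorb_prob_c m : absorb_prob m c = 1.
Proof. by elim: m => [|m IH]; rewrite /absorb_prob /= ?eqxx // kstep_c. Qed.

Lemma absorb_prob_ge0 m u : 0 <= absorb_prob m u.
Proof.
elim: m u => [|m IH] u /=; first exact: ler0n.
by apply: sumr_ge0 => v _; exact: mulr_ge0.
Qed.

Lemma absorb_prob_le1 m u : absorb_prob m u <= 1.
Proof.
elim: m u => [|m IH] u /=; first by rewrite lern1 leq_b1.
rewrite -(K_sum1 u); apply: ler_sum => v _.
by rewrite -[leRHS]mulr1 ler_wpM2l.
Qed.

Lemma kstep_affine m a b f u :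
  iter m kstep (fun v => a + b * f v) u = a + b * iter m kstep f u.
Proof.
elim: m u => [|m IH] u //=; rewrite /kstep.
under eq_bigr do rewrite IH mulrDr mulrCA.
by rewrite big_split /= -mulr_suml K_sum1 mul1r -mulr_sumr.
Qed.

Variable A : pred S.
Hypothesis A_closed : forall u v, A u -> 0 < K u v -> A v.

Lemma kstep_monotone m f h : {in A, forall v, f v <= h v} ->
  {in A, forall u, iter m kstep f u <= iter m kstep h u}.
Proof.
move=> fh; elim: m => [|m IH] u Au //=; first exact: fh.
apply: ler_sum => v _; have [Kuv_gt0|Kuv_le0] := ltP 0 (K u v).
  by rewrite ler_wpM2l ?K_ge0 ?IH //; exact: A_closed Kuv_gt0.
have -> : K u v = 0 by apply/eqP; rewrite eq_le Kuv_le0 K_ge0.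
by rewrite !mul0r.
Qed.

Variable V : S -> nat.
Hypothesis descent : forall u, A u -> u != c -> exists2 v, (V v < V u)%N & 0 < K u v.

Lemma absorb_prob_gt0 j u : A u -> (V u <= j)%N -> 0 < absorb_prob j u.
Proof.
elim: j u => [|j IH] u Au Vu; have [->|uc] := eqVneq u c;
  rewrite ?absorb_prob_c ?ltr01 //; have [v Vv Kuv] := descent Au uc.
  by move: Vu Vv; rewrite leqn0 => /eqP ->.
rewrite /absorb_prob iterS -/(absorb_prob j) /kstep (bigD1 v) //=.
rewrite ltr_pwDl ?mulr_gt0 ?IH //; first exact: A_closed Kuv.
  exact: leq_trans Vv Vu.
by apply: sumr_ge0 => w _; rewrite mulr_ge0 ?absorb_prob_ge0.
Qed.

Local Notation L := (\max_u V u).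

Lemma absorb_prob_uniform :
  exists2 rho, 0 < rho <= 1 & {in A, forall u, rho <= absorb_prob L u}.
Proof.
have [u0 Au0|A0] := pickP A; last first.
  by exists 1 => [|u]; rewrite ?ltr01 ?lexx // unfold_in A0.
have [um Aum um_min] := arg_minP (absorb_prob L) Au0.
exists (absorb_prob L um); last by move=> u; exact: um_min.
by rewrite absorb_prob_gt0 ?absorb_prob_le1 // leq_bigmax.
Qed.

Lemma absorb_prob_geometric rho Q : rho <= 1 ->
  {in A, forall u, rho <= absorb_prob L u} ->
  {in A, forall u, 1 - (1 - rho) ^+ Q <= absorb_prob (Q * L) u}.
Proof.
move=> rho_le1 rho_min; elim: Q => [|Q IH] u Au.
  by rewrite mul0n expr0 subrr absorb_prob_ge0.
set r := 1 - rho; rewrite mulSn /absorb_prob iterD -/(absorb_prob (Q * L)).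
apply: (le_trans _ (kstep_monotone L
  (f := fun v => (1 - r ^+ Q) + r ^+ Q * (v == c)%:R) _ Au)); last first.
  move=> v Av; have [->|vc] := eqVneq v c; first by rewrite absorb_prob_c /= mulr1 subrK.
  by rewrite /= mulr0 addr0 IH.
rewrite kstep_affine -/(absorb_prob L) exprS.
have rQ_ge0 : 0 <= r ^+ Q by rewrite exprn_ge0 // subr_ge0.
have := rho_min u Au; rewrite /r; nra.
Qed.

Lemma absorb_prob_cvg1 eps : 0 < eps ->
  exists m, {in A, forall u, 1 - eps <= absorb_prob m u}.
Proof.
move=> eps_gt0; have [rho /andP [rho_gt0 rho_le1] rho_min] := absorb_prob_uniform.
have [Q rQ] : exists Q, (1 - rho) ^+ Q <= eps by apply: geometric_le => //; lra.
exists (Q * L) => u Au; apply: le_trans (absorb_prob_geometric Q rho_le1 rho_min Au).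
by rewrite lerD2l lerN2.
Qed.

End AbsorbingChain.

Section PathEvents.
Local Open Scope classical_set_scope.

Lemma sum_measure_trivIset_le d (T : measurableType d) (R : realType)
    (mu : {measure set T -> \bar R}) (S : finType) (F : S -> set T) (B : set T) :
  (forall y, measurable (F y)) -> measurable B -> trivIset setT F ->
  (forall y, F y `<=` B) -> (\sum_y mu (F y) <= mu B)%E.
Proof.
move=> F_meas B_meas F_disj FB.
rewrite (reindex (@enum_val S predT)) /=; last first.
  by exists enum_rank => y; rewrite ?enum_valK ?enum_rankK.
rewrite -measure_bigsetU_ord //; last first.
  by move=> i i' _ _ /(F_disj _ _ Logic.I Logic.I); exact: enum_val_inj.
apply: le_measure; rewrite ?inE //; first exact: bigsetU_measurable.
by apply: (big_ind (fun C => C `<=` B)) => // C C' CB C'B w [/CB|/C'B].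
Qed.

Variables (R : realType) (A : eqType) (K : A -> A -> R) (x0 : A).
Variables (d : measure_display) (T : measurableType d) (P : probability T R).
Variable X : nat -> T -> A.

Definition path_weight (xs : nat -> A) (t : nat) : R :=
  (if xs 0%N == x0 then 1 else 0) * \prod_(u < t) K (xs u) (xs u.+1).

Definition follows (p : pred nat) (xs : nat -> A) : set T :=
  [set w | forall u, p u -> X u w = xs u].

Local Notation prefix t := (follows (fun u => (u <= t)%N)).

Definition eventually_at (y : A) : set T :=
  [set w | exists T0 : nat, forall t, (T0 <= t)%N -> X t w = y].

Hypothesis X_meas : forall t y, measurable [set w | X t w = y].
Hypothesis X_fdd : forall t (xs : nat -> A),
  P [set w | forall u, (u <= t)%N -> X u w = xs u] = (path_weight xs t)%:E.

Lemma follows_measurable p xs : measurable (follows p xs).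
Proof.
have -> : follows p xs = \bigcap_u (if p u then [set w | X u w = xs u] else setT).
  apply/seteqP; split => w /= H u; first by move=> _; case: ifP => // /H.
  by move=> pu; have := H u Logic.I; rewrite pu.
by apply: bigcapT_measurable => u; case: ifP.
Qed.

Lemma P_prefix t xs : P (prefix t xs) = (path_weight xs t)%:E.
Proof. exact: X_fdd. Qed.

Lemma eventually_atE y :
  eventually_at y = \bigcup_T0 follows (leq T0) (fun _ => y).
Proof. by apply/seteqP; split => w [T0]; exists T0. Qed.

Lemma eventually_at_measurable y : measurable (eventually_at y).
Proof.
by rewrite eventually_atE; apply: bigcupT_measurable => T0; exact: follows_measurable.
Qed.

Lemma eventually_at_frozen y : K x0 x0 = 1 -> y != x0 -> P (eventually_at y) = 0%E.
Proof.
move=> Kxx yx0.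
have tail_null T0 : P (follows (leq T0) (fun _ => y)) = 0%E.
  apply/eqP; rewrite eq_le measure_ge0 andbT.
  have <- : P (~` prefix T0 (fun _ => x0)) = 0%E.
    rewrite probability_setC; last exact: follows_measurable.
    by rewrite P_prefix /path_weight eqxx big1 ?mulr1 ?subee.
  apply: le_measure; rewrite ?inE.
  - exact: follows_measurable.
  - by apply: measurableC; exact: follows_measurable.
  - move=> w w_y w_x0; move: yx0.
    by rewrite -(w_y T0 (leqnn _)) (w_x0 T0 (leqnn _)) eqxx.
have cover : eventually_at y `<=` \bigcup_T0 follows (leq T0) (fun _ => y).
  by rewrite eventually_atE.
have := @measure_sigma_subadditive _ _ _ P _ _
  (fun T0 => follows_measurable _ _) (eventually_at_measurable y) cover.
rewrite eseries0 => [le0|T0 _ _]; last exact: tail_null.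
by apply/eqP; rewrite eq_le le0 measure_ge0.
Qed.

Variables (S : finType) (enc : S -> A) (c : S).
Hypothesis enc_inj : injective enc.
Hypothesis K_cc : K (enc c) (enc c) = 1.

Local Notation Kenc := (fun u v => K (enc u) (enc v)).
Local Notation window a j := (follows (fun u => (a <= u <= a + j)%N) (fun _ => enc c)).

Lemma path_weight_absorbed_tail xs t j : xs t = enc c ->
  path_weight xs t = path_weight (fun u => if (u <= t)%N then xs u else enc c) (t + j).
Proof.
move=> xs_t; rewrite /path_weight big_split_ord /=.
rewrite [X in _ = _ * (_ * X)]big1 ?mulr1 => [|i _]; last first.
  rewrite ltnNge leq_addr /=; case: ifP => [|_]; last exact: K_cc.
  by rewrite -[X in (_ <= X)%N]addn0 leq_add2l leqn0 => /eqP ->; rewrite addn0 xs_t.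
congr (_ * _); apply: eq_bigr => i _.
by rewrite (ltnW (ltn_ord i)) (ltn_ord i).
Qed.

Lemma absorb_prob0_le_window j t xs z : xs t = enc z ->
  ((path_weight xs t * absorb_prob Kenc c 0 z)%:E <= P (prefix t xs `&` window t j))%E.
Proof.
move=> xs_t; rewrite /absorb_prob /=; have [zc|_] := eqVneq z c; last first.
  by rewrite mulr0 measure_ge0.
rewrite mulr1 (path_weight_absorbed_tail j); last by rewrite xs_t zc.
rewrite -P_prefix; apply: le_measure; rewrite ?inE.
- exact: follows_measurable.
- by apply: measurableI; exact: follows_measurable.
- move=> w /= w_xs; split => u /= u_le.
    by have := w_xs u (leq_trans u_le (leq_addr j t)); rewrite u_le.
  case/andP: u_le => tu ut; rewrite (w_xs u ut).
  case: leqP => // ut'; have -> : u = t by apply/eqP; rewrite eqn_leq ut' tu.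
  by rewrite xs_t zc.
Qed.


Lemma path_weight_extend xs t y :
  path_weight (fun u => if u == t.+1 then y else xs u) t.+1 =
  path_weight xs t * K (xs t) y.
Proof.
rewrite /path_weight big_ord_recr /= eqxx (ltn_eqF (ltnSn t)) -mulrA.
congr (_ * (_ * _)); apply: eq_bigr => i _.
by rewrite eqSS !ltn_eqF // ltnS ltnW.
Qed.

Lemma absorb_prob_le_window j m t xs z : xs t = enc z ->
  ((path_weight xs t * absorb_prob Kenc c m z)%:E
     <= P (prefix t xs `&` window (t + m) j))%E.
Proof.
elim: m t xs z => [|m IH] t xs z xs_t.
  by rewrite addn0; exact: absorb_prob0_le_window.
(* Markov property: split according to the state at time t+1. *)
pose ext y u := if u == t.+1 then enc y else xs u.
pose F y := prefix t.+1 (ext y) `&` window (t + m.+1) j.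
have F_meas y : measurable (F y) by apply: measurableI; exact: follows_measurable.
apply: (@le_trans _ _ (\sum_y P (F y))).
  rewrite /absorb_prob iterS -/(absorb_prob Kenc c m) /kstep mulr_sumr -sumEFin.
  apply: lee_sum => y _; rewrite mulrA -xs_t -path_weight_extend /F -addSnnS.
  by apply: IH; rewrite /ext eqxx.
apply: sum_measure_trivIset_le => //.
- by apply: measurableI; exact: follows_measurable.
- move=> y y' _ _ [w [[w_y _] [w_y' _]]]; apply: enc_inj.
  by move: (w_y t.+1 (leqnn _)) (w_y' t.+1 (leqnn _)); rewrite /ext eqxx => -> ->.
- move=> y w [w_y w_win]; split => // u /= ut.
  by rewrite (w_y u (leqW ut)) /ext ltn_eqF.
Qed.

Lemma eventually_absorbed z0 : enc z0 = x0 ->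
  (forall eps, 0 < eps -> exists m, 1 - eps <= absorb_prob Kenc c m z0) ->
  P (eventually_at (enc c)) = 1%E.
Proof.
move=> z0_x0 absorbed; apply/eqP; rewrite eq_le probability_le1 /=; last first.
  exact: eventually_at_measurable.
apply/lee_addgt0Pr => eps eps_gt0; have [m m_eps] := absorbed eps eps_gt0.
have window_meas j : measurable (window m j) by exact: follows_measurable.
have window_bound j : ((absorb_prob Kenc c m z0)%:E <= P (window m j))%E.
  have := @absorb_prob_le_window j m 0 (fun _ => x0) z0 (esym z0_x0).
  rewrite /path_weight eqxx big_ord0 !mul1r add0n => /le_trans; apply.
  apply: le_measure; rewrite ?inE //.
  by apply: measurableI => //; exact: follows_measurable.
have forever : ((absorb_prob Kenc c m z0)%:E <= P (\bigcap_j window m j))%E.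
  have window_decr : {homo (fun j => window m j) : a b / (a <= b)%N >-> (b <= a)%O}.
    move=> a b ab; rewrite subsetEset => w w_b u /andP [mu ub]; apply: w_b.
    by rewrite mu (leq_trans ub) // leq_add2l.
  have window0_fin := le_lt_trans (probability_le1 P (window_meas 0%N)) (ltry _).
  have window_cvg := nonincreasing_cvg_mu window0_fin
    window_meas (bigcapT_measurable window_meas) window_decr.
  rewrite -(cvg_lim (@ereal_hausdorff R) window_cvg).
  by apply: lime_ge; [apply/cvg_ex; eexists; exact: window_cvg | exact: nearW].
have absorbed_forever : \bigcap_j window m j `<=` eventually_at (enc c).
  move=> w w_win; exists m => t mt; apply: (w_win (t - m)%N Logic.I).
  by rewrite mt /= subnKC.
have E_bound : ((1 - eps)%:E <= P (eventually_at (enc c)))%E.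
  rewrite (le_trans _ (le_trans forever _)) ?lee_fin //.
  apply: le_measure; rewrite ?inE //; first exact: bigcapT_measurable.
  exact: eventually_at_measurable.
by apply: le_trans (leeD E_bound (lexx _)); rewrite -EFinD lee_fin subrK.
Qed.
End PathEvents.

Section SocialCost.
Variables (R : realType) (n : nat) (W : 'I_n -> 'I_n -> R).
Hypothesis hW : row_stochastic W.

Lemma C_socialB i z a (x : state n) :
  C_social W i z x - C_social W i a x =
  \sum_j W i j * (`|z - x j| - `|a - x j|)%:~R.
Proof.
rewrite /C_social -sumrB; apply: eq_bigr => j _.
by rewrite -!intr_norm -mulrBr intrB.
Qed.

Lemma C_social_opp i z (x : state n) :
  C_social W i (- z) [ffun j => - x j] = C_social W i z x.
Proof. by apply: eq_bigr => j _; rewrite ffunE -opprD intrN normrN. Qed.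

Lemma sum_W_signed i (M : pred 'I_n) (e : R) :
  \sum_j W i j * (if M j then e else - e) = e * (2 * \sum_(j | M j) W i j - 1).
Proof.
case: hW => _ /(_ i); rewrite (bigID M) /= => W_sum1.
have sum_in : \sum_(j | M j) W i j * (if M j then e else - e) =
    e * \sum_(j | M j) W i j.
  by rewrite mulr_sumr; apply: eq_bigr => j ->; exact: mulrC.
have sum_out : \sum_(j | ~~ M j) W i j * (if M j then e else - e) =
    - e * \sum_(j | ~~ M j) W i j.
  by rewrite mulr_sumr; apply: eq_bigr => j /negbTE ->; exact: mulrC.
rewrite (bigID M) /= sum_in sum_out.
have -> : \sum_(j | ~~ M j) W i j = 1 - \sum_(j | M j) W i j by lra.
ring.
Qed.

Lemma C_social_extreme_down i (x : state n) a :
  (forall j, x j <= a) -> \sum_(j | x j == a) W i j <= 1 / 2 ->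
  C_social W i (a - 1) x <= C_social W i a x.
Proof.
move=> x_le weight_le; rewrite -subr_le0 C_socialB.
rewrite (eq_bigr (fun j => W i j * (if x j == a then 1 else - 1))) => [|j _].
  rewrite sum_W_signed; lra.
congr (_ * _); have := x_le j; case: eqP => [->|/eqP xa] xj.
  by have -> : `|a - 1 - a| - `|a - a| = 1 :> int by lia.
by have -> : `|a - 1 - x j| - `|a - x j| = - 1 :> int by lia.
Qed.

Lemma C_social_cohesive_strict i (x : state n) (M : {set 'I_n}) a z :
  1 / 2 < \sum_(j in M) W i j -> {in M, forall j, x j = a} -> z != a ->
  C_social W i a x < C_social W i z x.
Proof.
move=> weight_gt xM za; rewrite -subr_gt0 C_socialB.
have za_gt0 : 0 < (`|z - a| : int)%:~R :> R by rewrite ltr0z normr_gt0 subr_eq0.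
apply: (@lt_le_trans _ _ (`|z - a|%:~R * (2 * \sum_(j in M) W i j - 1))).
  by rewrite mulr_gt0 //; lra.
rewrite -sum_W_signed; apply: ler_sum => j _; apply: ler_wpM2l; first by case: hW.
case: ifP => jM; rewrite -?intrN ler_int; last lia.
by rewrite xM // subrr normr0 subr0.
Qed.

End SocialCost.

Section PIDChain.
Variables (R : realType) (n : nat) (W : 'I_n -> 'I_n -> R).
Variables (k : int) (s : nat) (theta : int) (q : 'I_n -> state n -> int -> R).
Hypothesis hn : (0 < n)%N.
Hypothesis hq : valid_update W k s theta q.

Local Notation inOn x := (forall j, inO k s (x j)).
Local Notation Pset := (Pset W k s theta).

Definition set_opinion (x : state n) i z : state n :=
  [ffun j => if j == i then z else x j].

Lemma sum_inv_card : \sum_(i < n) (n%:R : R)^-1 = 1.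
Proof.
by rewrite sumr_const card_ord -(mulr_natr (n%:R^-1)) mulVf // pnatr_eq0 -lt0n.
Qed.

Lemma q_gt0 (x : state n) i z : inOn x -> (0 < q i x z) = Pset i x z.
Proof. by move=> xO; have [_ [-> _]] := hq i xO. Qed.

Lemma q_ge0 (x : state n) i z : inOn x -> 0 <= q i x z.
Proof. by move=> xO; have [-> _] := hq i xO. Qed.

Lemma trans_ge0 (x y : state n) : inOn x -> 0 <= trans q x y.
Proof.
move=> xO; apply: sumr_ge0 => i _; case: ifP => // _.
by rewrite mulr_ge0 ?q_ge0 // invr_ge0 ler0n.
Qed.

Lemma trans_gt0_move (x y : state n) : inOn x -> 0 < trans q x y ->
  exists i, y = set_opinion x i (y i) /\ Pset i x (y i).
Proof.
move=> xO; rewrite lt0r => /andP [+ _]; rewrite psumr_neq0 => [|i _]; last first.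
  by case: ifP => // _; rewrite mulr_ge0 ?q_ge0 // invr_ge0 ler0n.
case/hasP => i _; case: ifP => [/forallP y_off|]; last by rewrite ltxx.
rewrite pmulr_rgt0 ?invr_gt0 ?ltr0n // q_gt0 // => Pyi.
exists i; split => //; apply/ffunP => j; rewrite ffunE.
by case: eqP => [->|/eqP ji] //; apply/eqP; exact: (implyP (y_off j)).
Qed.

Lemma trans_set_opinion_gt0 (x : state n) i z : inOn x -> Pset i x z ->
  0 < trans q x (set_opinion x i z).
Proof.
move=> xO Pz; rewrite /trans (bigD1 i) //= ifT; last first.
  by apply/forallP => j; apply/implyP => ji; rewrite ffunE (negbTE ji).
rewrite ltr_pwDl ?mulr_gt0 ?invr_gt0 ?ltr0n ?q_gt0 ?ffunE ?eqxx //.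
apply: sumr_ge0 => j _; case: ifP => // _.
by rewrite mulr_ge0 ?q_ge0 // invr_ge0 ler0n.
Qed.

Lemma q_frozen (x : state n) i : inOn x -> (forall z, Pset i x z -> z = x i) ->
  q i x (x i) = 1.
Proof.
move=> xO frozen; have [_ [_]] := hq i xO.
have [u u_xi] : exists u : 'I_s.+1, k + (u : nat)%:Z = x i.
  have /andP [k_xi xi_ks] := xO i.
  by exists (inord (absz (x i - k))); rewrite inordK; lia.
rewrite (bigD1 u) //= big1 ?addr0 ?u_xi // => v vu.
apply/eqP; rewrite eq_le q_ge0 // andbT leNgt q_gt0 //.
apply/negP => /frozen; rewrite -u_xi => /addrI [] /val_inj/eqP.
by rewrite (negbTE vu).
Qed.

Lemma trans_frozen (x : state n) : inOn x -> (forall i z, Pset i x z -> z = x i) ->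
  trans q x x = 1.
Proof.
move=> xO frozen; rewrite /trans (eq_bigr (fun _ => n%:R^-1)) => [|i _].
  exact: sum_inv_card.
rewrite ifT ?q_frozen ?mulr1 //; first exact: frozen.
by apply/forallP => j; apply/implyP.
Qed.


Lemma Pset_at_theta (x : state n) i z : x i = theta -> Pset i x z -> z = theta.
Proof. by move=> xi /and3P [_ _]; rewrite /C_cog xi subrr; lia. Qed.

(* Profiles of O^n coded by the offsets of the opinions from k, so that the
   state space becomes a finite type. *)
Definition opinion_code := {ffun 'I_n -> 'I_s.+1}.

Definition decode (u : opinion_code) : state n := [ffun j => k + (u j : nat)%:Z].

Lemma decode_inO u : inOn (decode u).
Proof. by move=> j; rewrite /inO ffunE; have := ltn_ord (u j); lia. Qed.

Lemma decode_coord_inj u v j : decode u j = decode v j -> u j = v j.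
Proof. by rewrite !ffunE => /addrI [] /val_inj. Qed.

Lemma decode_inj : injective decode.
Proof.
by move=> u v uv; apply/ffunP => j; apply: decode_coord_inj; rewrite uv.
Qed.

Lemma decode_onto (x : state n) : inOn x -> exists u, decode u = x.
Proof.
move=> xO; exists [ffun j => inord (absz (x j - k))]; apply/ffunP => j.
rewrite !ffunE; have := xO j; move: (x j) => y /andP [ky yk].
by rewrite inordK; lia.
Qed.

Lemma trans_decode_sum1 u : \sum_v trans q (decode u) (decode v) = 1.
Proof.
rewrite /trans exchange_big /= -[RHS]sum_inv_card; apply: eq_bigr => i _.
rewrite (partition_big (fun v : opinion_code => v i) predT) //=.
have [_ [_ q_sum1]] := hq i (decode_inO u).
transitivity (n%:R^-1 * \sum_(w < s.+1) q i (decode u) (k + (w : nat)%:Z)).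
  rewrite mulr_sumr; apply: eq_bigr => w _.
  pose v : opinion_code := [ffun j => if j == i then w else u j].
  rewrite (bigD1 v) ?ffunE ?eqxx //= big1 ?addr0 => [|v' /andP [/eqP v'i v'v]].
    rewrite ifT ?ffunE ?eqxx //.
    by apply/forallP => j; apply/implyP => ji; rewrite !ffunE (negbTE ji).
  case: ifP => // /forallP v'_off; case/eqP: v'v; apply/ffunP => j; rewrite ffunE.
  case: eqP => [->|/eqP ji] //; apply: decode_coord_inj.
  by apply/eqP; exact: (implyP (v'_off j)).
by rewrite q_sum1 mulr1.
Qed.


Hypothesis hW : row_stochastic W.
Hypothesis htheta : inO k s theta.

Lemma consensus_frozen : trans q (consensus n theta) (consensus n theta) = 1.
Proof.
apply: trans_frozen => [j|i z]; first by rewrite ffunE.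
by rewrite ffunE; apply: Pset_at_theta; rewrite ffunE.
Qed.

Definition block_state (M : {set 'I_n}) (a : int) : state n :=
  [ffun j => if j \in M then a else theta].

Lemma block_state_frozen M a : strictly_cohesive W M -> inO k s a ->
  trans q (block_state M a) (block_state M a) = 1.
Proof.
move=> /forall_inP M_coh aO; apply: trans_frozen => [j|i z Pz].
  by rewrite ffunE; case: ifP.
have [iM|iM] := boolP (i \in M); last first.
  have xi : block_state M a i = theta by rewrite ffunE (negbTE iM).
  by rewrite xi; exact: Pset_at_theta Pz.
rewrite ffunE iM; apply/eqP/negPn/negP => za; case/and3P: Pz => _ + _.
rewrite ffunE iM; apply/negP; rewrite -ltNge.
apply: C_social_cohesive_strict za => //; first exact: M_coh.
by move=> j jM; rewrite ffunE jM.
Qed.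

Definition meets_cohesive_sets (I : {set 'I_n}) : Prop :=
  forall M : {set 'I_n}, M != finset.set0 -> strictly_cohesive W M ->
    exists2 i, i \in M & i \in I.

Lemma level_set_weight_le (I : {set 'I_n}) (x : state n) a j0 :
  meets_cohesive_sets I ->
  {in I, forall j, x j = theta} -> a != theta -> x j0 = a ->
  exists2 i, x i = a & \sum_(j | x j == a) W i j <= 1 / 2.
Proof.
move=> coh xI a_theta xj0.
have : ~~ strictly_cohesive W [set j | x j == a].
  apply/negP => /(coh _) [|i]; first by apply/set0Pn; exists j0; rewrite inE xj0.
  by rewrite inE => /eqP xia /xI xi; move: a_theta; rewrite -xia xi eqxx.
case/forallPn => i; rewrite negb_imply -leNgt => /andP [+ weight_le].
rewrite inE => /eqP xi.
by exists i => //; move: weight_le; under eq_bigl do rewrite inE.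
Qed.


Lemma improving_move (I : {set 'I_n}) (x : state n) :
  meets_cohesive_sets I ->
  inOn x -> {in I, forall j, x j = theta} -> x != consensus n theta ->
  exists i z, Pset i x z /\ (absz (z - theta) < absz (x i - theta))%N.
Proof.
move=> coh xO xI x_ne; have /andP [k_theta theta_ks] := htheta.
case: (boolP [exists j, theta < x j]) => [/existsP [j0 theta_lt]|/existsPn x_le].
  have [jm _ jm_max] := arg_maxP x (isT : xpredT j0).
  have theta_lt_jm : theta < x jm := lt_le_trans theta_lt (jm_max j0 isT).
  have jm_ne : x jm != theta by rewrite gt_eqF.
  have [i xi weight_le] := level_set_weight_le coh xI jm_ne (erefl (x jm)).
  exists i, (x jm - 1); split; last by rewrite xi; lia.
  apply/and3P; split; last by rewrite /C_cog xi; lia.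
    by have := xO jm; rewrite /inO; lia.
  by rewrite xi; apply: C_social_extreme_down => // j; exact: jm_max.
(* Below theta the situation is the mirror image of the one above, through
   x |-> -x. *)
have [j0 x_lt] : exists j0, x j0 < theta.
  apply/existsP; apply: contraR x_ne => /existsPn x_ge; apply/eqP/ffunP => j.
  by apply/eqP; rewrite ffunE eq_le !leNgt x_le x_ge.
have [jm _ jm_min] := arg_minP x (isT : xpredT j0).
have jm_lt_theta : x jm < theta := le_lt_trans (jm_min j0 isT) x_lt.
have jm_ne : x jm != theta by rewrite lt_eqF.
have [i xi weight_le] := level_set_weight_le coh xI jm_ne (erefl (x jm)).
exists i, (x jm + 1); split; last by rewrite xi; lia.
apply/and3P; split; last by rewrite /C_cog xi; lia.
  by have := xO jm; rewrite /inO; lia.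
rewrite xi -C_social_opp -[C_social _ _ (x jm) _]C_social_opp opprD.
apply: C_social_extreme_down => // [j|]; first by rewrite !ffunE lerN2 jm_min.
by under eq_bigl do rewrite ffunE eqr_opp.
Qed.


Definition consensus_code : opinion_code := [ffun _ => inord (absz (theta - k))].

Lemma decode_consensus_code : decode consensus_code = consensus n theta.
Proof.
have /andP [k_theta theta_ks] := htheta.
by apply/ffunP => j; rewrite !ffunE inordK; lia.
Qed.

Definition truthful_on (I : {set 'I_n}) (u : opinion_code) : bool :=
  [forall j in I, decode u j == theta].

Definition disagreement (u : opinion_code) : nat := \sum_j absz (decode u j - theta).

Lemma truthful_on_closed (I : {set 'I_n}) (u v : opinion_code) :
  truthful_on I u -> 0 < trans q (decode u) (decode v) -> truthful_on I v.
Proof.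
move=> /forall_inP uI /(trans_gt0_move (decode_inO u)) [i [vE Pvi]].
apply/forall_inP => j jI; rewrite vE ffunE.
have [ji|_] := eqVneq j i; last exact: uI.
by apply/eqP; apply: Pset_at_theta Pvi; apply/eqP; rewrite -ji uI.
Qed.

Lemma disagreement_descent (I : {set 'I_n}) : meets_cohesive_sets I ->
  forall u, truthful_on I u -> u != consensus_code ->
  exists2 v, (disagreement v < disagreement u)%N & 0 < trans q (decode u) (decode v).
Proof.
move=> coh u /forall_inP uI u_ne.
have x_ne : decode u != consensus n theta.
  by rewrite -decode_consensus_code (inj_eq decode_inj).
have [i [z [Pz z_closer]]] :=
  improving_move coh (decode_inO u) (fun j jI => eqP (uI j jI)) x_ne.
have yO : inOn (set_opinion (decode u) i z).
  by move=> j; rewrite ffunE; case: eqP => _; [case/and3P: Pz | exact: decode_inO].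
have [v vE] := decode_onto yO.
exists v; last by rewrite vE; exact: trans_set_opinion_gt0 (decode_inO u) Pz.
rewrite /disagreement (bigD1 i) //= [X in (_ < X)%N](bigD1 i) //= vE ffunE eqxx.
rewrite (eq_bigr (fun j => absz (decode u j - theta))) ?ltn_add2r // => j ji.
by rewrite ffunE (negbTE ji).
Qed.


Lemma PID_converges (I : {set 'I_n}) (x0 : state n)
    d (T : measurableType d) (P : probability T R) (X : nat -> T -> state n) :
  meets_cohesive_sets I ->
  admissible k s theta I x0 -> PID_process P q x0 X ->
  as_converges_to_consensus theta P X.
Proof.
move=> coh /andP [/forallP x0O /forall_inP x0I] [X_meas X_fdd].
have [z0 z0_x0] := decode_onto x0O.
have z0_I : truthful_on I z0 by apply/forall_inP => j jI; rewrite z0_x0 x0I.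
have K_ge0 u v : 0 <= trans q (decode u) (decode v).
  by apply: trans_ge0; exact: decode_inO.
have K_cc : trans q (decode consensus_code) (decode consensus_code) = 1.
  by rewrite decode_consensus_code consensus_frozen.
rewrite /as_converges_to_consensus -decode_consensus_code.
apply: (eventually_absorbed X_meas X_fdd decode_inj K_cc z0_x0) => eps eps_gt0.
have [m absorbed] := @absorb_prob_cvg1 _ _ _ consensus_code K_ge0 trans_decode_sum1 K_cc
  (truthful_on I) (@truthful_on_closed I) disagreement (disagreement_descent coh)
  eps eps_gt0.
by exists m; exact: absorbed z0 z0_I.
Qed.

Lemma block_state_admissible (I M : {set 'I_n}) a :
  inO k s a -> M :&: I = finset.set0 -> admissible k s theta I (block_state M a).
Proof.
move=> aO /eqP; rewrite setI_eq0 => MI; apply/andP; split.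
  by apply/forallP => j; rewrite ffunE; case: ifP.
by apply/forall_inP => j jI; rewrite ffunE (disjointFl MI jI).
Qed.

Lemma block_state_never_converges (M : {set 'I_n}) a
    d (T : measurableType d) (P : probability T R) (X : nat -> T -> state n) :
  M != finset.set0 -> strictly_cohesive W M -> inO k s a -> a != theta ->
  PID_process P q (block_state M a) X -> ~ as_converges_to_consensus theta P X.
Proof.
move=> M0 Mcoh aO a_theta [X_meas X_fdd].
rewrite /as_converges_to_consensus (eventually_at_frozen X_meas X_fdd).
- by move=> /eqP; rewrite eqe eq_sym oner_eq0.
- exact: block_state_frozen.
- case/set0Pn: M0 => j jM; apply/eqP => /ffunP /(_ j).
  by rewrite !ffunE jM => theta_a; rewrite theta_a eqxx in a_theta.
Qed.

End PIDChain.

Lemma exists_other_opinion k s theta :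
  (1 <= s)%N -> inO k s theta -> exists2 a, inO k s a & a != theta.
Proof.
rewrite /inO => s_ge1 /andP [k_theta theta_ks].
have [theta_lt|theta_ge] := ltP theta (k + s%:Z).
  by exists (theta + 1); [apply/andP; split | apply/eqP]; lia.
by exists (theta - 1); [apply/andP; split | apply/eqP]; lia.
Qed.

Theorem theorem6 (R : realType) (n : nat) (hn : (0 < n)%N)
  (W : 'I_n -> 'I_n -> R) (hW : row_stochastic W)
  (k : int) (s : nat) (hs : (1 <= s)%N) (theta : int) (htheta : inO k s theta)
  (q : 'I_n -> state n -> int -> R) (hq : valid_update W k s theta q)
  (I : {set 'I_n})
  (d : measure_display) (T : measurableType d) (P : probability T R)
  (X : state n -> nat -> T -> state n)
  (hX : forall x0, admissible k s theta I x0 ->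
          PID_process P q x0 (X x0)) :
  (forall x0, admissible k s theta I x0 ->
     as_converges_to_consensus theta P (X x0)) <->
  (forall M : {set 'I_n}, M != finset.set0 -> strictly_cohesive W M ->
     exists2 i, i \in M & i \in I).
Proof.
split=> [conv M M0 Mcoh|coh x0 adm]; last first.
  exact: (PID_converges hn hq hW htheta coh adm (hX x0 adm)).
have [MI|/set0Pn [i /setIP [iM iI]]] := eqVneq (M :&: I) finset.set0; last by exists i.
have [a aO a_theta] := exists_other_opinion hs htheta.
have adm := block_state_admissible htheta aO MI.
by case: (block_state_never_converges hn hq hW htheta M0 Mcoh aO a_theta (hX _ adm)
  (conv _ adm)).
Qed.
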